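(* Let $1\le s<t\le k$ and $u,v\ge 2$ be integers. If there exist an AOA$(s,t,k,v)$ and an AOA$(s,t,k,u)$, then there exists an AOA$(s,t,k,uv)$.
   Context: An orthogonal array OA$(t,k,v)$ (with $1\le t\le k$) is a $v^t\times k$ array with entries from a set $X$ of size $v$ such that, for every choice of $t$ of its columns, each $t$-tuple in $X^t$ appears exactly once as a row of the corresponding $v^t\times t$ subarray. For integers $1\le s\le t\le k$, an augmented orthogonal array AOA$(s,t,k,v)$ is a $v^t\times(k+1)$ array $A$ such that: (1) the first $k$ columns of $A$ form an OA$(t,k,v)$ on a symbol set $X$ of size $v$; (2) the last column of $A$ has entries from a set $Y$ of size $v^{t-s}$; (3) for any choice of $s$ of the first $k$ columns, these $s$ columns together with the last column contain every $(s+1)$-tuple of $X^s\times Y$ exactly once as a row. *)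

From mathcomp Require Import all_boot.
Set Implicit Arguments. Unset Strict Implicit. Unset Printing Implicit Defensive.

Definition is_OA (X : finType) (N t k : nat) (A : 'I_N -> 'I_k -> X) : Prop :=
  N = #|X| ^ t /\
  forall c : 'I_t -> 'I_k, injective c ->
  forall f : {ffun 'I_t -> X},
    #|[set r : 'I_N | [forall j : 'I_t, A r (c j) == f j]]| = 1.

(* AOA(s,t,k,v): a v^t x (k+1) array; first k columns (A) form an
   OA(t,k,v) over X with |X| = v, last column (L) has entries in Y with
   |Y| = v^(t-s), and for any s of the first k columns, these together
   with the last column contain every (s+1)-tuple of X^s x Y exactly once. *)
Definition is_AOA (X Y : finType) (N s t k : nat)
    (A : 'I_N -> 'I_k -> X) (L : 'I_N -> Y) : Prop :=
  [/\ @is_OA X N t k A,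
      #|Y| = #|X| ^ (t - s) &
      forall c : 'I_s -> 'I_k, injective c ->
      forall (f : {ffun 'I_s -> X}) (y : Y),
        #|[set r : 'I_N | [forall j : 'I_s, A r (c j) == f j] && (L r == y)]| = 1 ].

Definition AOA_exists (s t k v : nat) : Prop :=
  exists (A : 'I_(v ^ t) -> 'I_k -> 'I_v) (L : 'I_(v ^ t) -> 'I_(v ^ (t - s))),
    @is_AOA _ _ (v ^ t) s t k A L.

From mathcomp Require Import all_boot.

Set Implicit Arguments.
Unset Strict Implicit.

(* The direct product of an AOA(s,t,k,u) with rows R1 and an
   AOA(s,t,k,v) with rows R2 has rows R1 * R2, symbols pairs and last-column
   entries pairs; the rows of the product agreeing with a prescribed pair of
   tuples are exactly the pairs of rows agreeing in each factor, so every
   count 1 * 1 = 1.  Relabelling rows and symbols by bijections onto ordinals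
   then gives an AOA(s,t,k,uv) in the required format. *)

(* [is_AOA] with rows indexed by an arbitrary finite type, so that the rows of
   a product array can be taken to be pairs of rows. *)
Definition is_AOA_on (R X Y : finType) (s t k : nat)
    (A : R -> 'I_k -> X) (L : R -> Y) : Prop :=
  [/\ #|R| = #|X| ^ t,
      forall c : 'I_t -> 'I_k, injective c -> forall f : {ffun 'I_t -> X},
        #|[set r | [forall j, A r (c j) == f j]]| = 1,
      #|Y| = #|X| ^ (t - s) &
      forall c : 'I_s -> 'I_k, injective c ->
      forall (f : {ffun 'I_s -> X}) (y : Y),
        #|[set r | [forall j, A r (c j) == f j] && (L r == y)]| = 1].

Lemma is_AOAP (X Y : finType) N s t k A L :
  @is_AOA X Y N s t k A L <-> is_AOA_on s t A L.
Proof.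
split=> [[[HN OA] HY AOA] | [HN OA HY AOA]]; first by split; rewrite ?card_ord.
by split; first split; rewrite // -HN card_ord.
Qed.

Lemma card_set_pair (T1 T2 : finType) (P1 : pred T1) (P2 : pred T2) :
  #|[set r : T1 * T2 | P1 r.1 && P2 r.2]| = #|[set r | P1 r]| * #|[set r | P2 r]|.
Proof. by rewrite -cardsX; apply: eq_card => -[r1 r2]; rewrite !inE. Qed.

Lemma forall_pair_eq (I X1 X2 : finType) (a1 : I -> X1) (a2 : I -> X2)
    (f : {ffun I -> X1 * X2}) :
  [forall j, (a1 j, a2 j) == f j] =
  [forall j, a1 j == [ffun j => (f j).1] j] &&
  [forall j, a2 j == [ffun j => (f j).2] j].
Proof.
apply/forallP/andP => [Hf | [/forallP H1 /forallP H2] j].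
  by split; apply/forallP => j; have := Hf j; rewrite ffunE -pair_eqE => /andP[].
by have := H1 j; have := H2 j; rewrite !ffunE -pair_eqE /= => -> ->.
Qed.

Lemma is_AOA_on_prod (R1 R2 X1 X2 Y1 Y2 : finType) s t k
    (A1 : R1 -> 'I_k -> X1) (L1 : R1 -> Y1)
    (A2 : R2 -> 'I_k -> X2) (L2 : R2 -> Y2) :
  is_AOA_on s t A1 L1 -> is_AOA_on s t A2 L2 ->
  is_AOA_on s t (fun r j => (A1 r.1 j, A2 r.2 j)) (fun r => (L1 r.1, L2 r.2)).
Proof.
case=> HR1 OA1 HY1 AOA1 [HR2 OA2 HY2 AOA2]; split.
- by rewrite !card_prod HR1 HR2 expnMn.
- move=> c ic f; under eq_finset => r do rewrite forall_pair_eq.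
  rewrite -[1]/(1 * 1) -{1}(OA1 c ic [ffun j => (f j).1]) //.
  by rewrite -(OA2 c ic [ffun j => (f j).2]) // -card_set_pair.
- by rewrite !card_prod HY1 HY2 expnMn.
- move=> c ic f [y1 y2].
  under eq_finset => r do rewrite forall_pair_eq xpair_eqE andbACA.
  rewrite -[1]/(1 * 1) -{1}(AOA1 c ic [ffun j => (f j).1] y1) //.
  by rewrite -(AOA2 c ic [ffun j => (f j).2] y2) // -card_set_pair.
Qed.

Lemma is_AOA_on_relabel_rows (R R' X Y : finType) s t k
    (A : R -> 'I_k -> X) (L : R -> Y) (e : R' -> R) :
  bijective e -> is_AOA_on s t A L ->
  is_AOA_on s t (fun r j => A (e r) j) (fun r => L (e r)).
Proof.
move=> be [HR OA HY AOA].
have card_pre (P : pred R) : #|[set r' | P (e r')]| = #|[set r | P r]|.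
  rewrite -(on_card_preimset (onW_bij _ be)).
  by apply: eq_card => r; rewrite !inE.
split=> // [|c ic f|c ic f y]; first by rewrite (bij_eq_card be).
- by rewrite (card_pre (fun r => [forall j, A r (c j) == f j])) OA.
- by rewrite (card_pre (fun r => [forall j, A r (c j) == f j] && (L r == y))) AOA.
Qed.

Lemma is_AOA_on_relabel_symbols (R X X' Y Y' : finType) s t k
    (A : R -> 'I_k -> X) (L : R -> Y) (eX : X -> X') (eY : Y -> Y') :
  bijective eX -> bijective eY -> is_AOA_on s t A L ->
  is_AOA_on s t (fun r j => eX (A r j)) (fun r => eY (L r)).
Proof.
move=> [gX eXK gXK] [gY eYK gYK] [HR OA HY AOA].
have eqX x x' : (eX x == x') = (x == gX x') by rewrite -{1}(gXK x') (can_eq eXK).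
have eqY y y' : (eY y == y') = (y == gY y') by rewrite -{1}(gYK y') (can_eq eYK).
have cardX : #|X'| = #|X| by rewrite (bij_eq_card (Bijective eXK gXK)).
split.
- by rewrite HR cardX.
- move=> c ic f; rewrite -(OA c ic [ffun j => gX (f j)]).
  by apply: eq_card => r; rewrite !inE; apply: eq_forallb => j; rewrite ffunE eqX.
- by rewrite cardX -HY (bij_eq_card (Bijective eYK gYK)).
- move=> c ic f y; rewrite -(AOA c ic [ffun j => gX (f j)] (gY y)).
  apply: eq_card => r; rewrite !inE eqY; congr (_ && _).
  by apply: eq_forallb => j; rewrite ffunE eqX.
Qed.

Lemma bij_of_eq_card (T T' : finType) :
  #|T'| = #|T| -> exists f : T' -> T, bijective f.
Proof.
move=> eqT; exists (enum_val \o cast_ord eqT \o enum_rank).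
apply: bij_comp; last exact: enum_rank_bij.
apply: bij_comp; first exact: enum_val_bij.
exact: (Bijective (cast_ordK eqT) (cast_ordKV eqT)).
Qed.

Lemma is_AOA_on_relabel (R R' X X' Y Y' : finType) s t k
    (A : R -> 'I_k -> X) (L : R -> Y) :
  is_AOA_on s t A L -> #|R'| = #|R| -> #|X| = #|X'| -> #|Y| = #|Y'| ->
  exists (A' : R' -> 'I_k -> X') (L' : R' -> Y'), is_AOA_on s t A' L'.
Proof.
move=> H /bij_of_eq_card[eR bR] /bij_of_eq_card[eX bX] /bij_of_eq_card[eY bY].
exists (fun r j => eX (A (eR r) j)), (fun r => eY (L (eR r))).
exact/(is_AOA_on_relabel_symbols bX bY)/(is_AOA_on_relabel_rows bR).
Qed.

Theorem theorem2p1 (s t k u v : nat) :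
  1 <= s -> s < t -> t <= k -> 2 <= u -> 2 <= v ->
  AOA_exists s t k v -> AOA_exists s t k u -> AOA_exists s t k (u * v).
Proof.
move=> _ _ _ _ _ [Av [Lv /is_AOAP Hv]] [Au [Lu /is_AOAP Hu]].
have [||| A [L H]] := is_AOA_on_relabel (R' := 'I_((u * v) ^ t))
  (X' := 'I_(u * v)) (Y' := 'I_((u * v) ^ (t - s))) (is_AOA_on_prod Hu Hv).
- by rewrite card_prod !card_ord expnMn.
- by rewrite card_prod !card_ord.
- by rewrite card_prod !card_ord expnMn.
by exists A, L; apply/is_AOAP.
Qed.
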